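(* Let $U\subset(0,1)^d$ be open, $A,B>0$, $C\ge0$, $r$ a positive integer or $+\infty$, and $l\ge1$ an integer. If $f_1,\ldots,f_l:U\to\mathbb{R}$ are $(A,B,C)$-mild up to order $r$, then the product $f_1\cdots f_l$ is $(lA,B^l,C)$-mild up to order $r$. Likewise, if $f_1,\ldots,f_l$ are weakly $(A,B,C)$-mild up to order $r$, then $f_1\cdots f_l$ is weakly $(lA,B^l,C)$-mild up to order $r$.
   Context: For $U$ open, $g:U\to\mathbb{R}$ is $(A,B,C)$-mild up to order $r$ if it is $C^r$ and $|g^{(\nu)}(x)|\le B^{C+1}A^{|\nu|}|\nu|!^{C+1}$ for all $x\in U$ and $\nu\in\mathbb{N}^d$ with $|\nu|\le r$; it is weakly $(A,B,C)$-mild up to order $r$ (for $U\subset(0,1)^d$) if it is $C^r$ and $|g^{(\nu)}(x)|\le B^{C+1}A^{|\nu|}|\nu|!^{C+1}/x^\nu$ for the same $x,\nu$. Here $g^{(\nu)}=\partial^{|\nu|}g/\partial x_1^{\nu_1}\cdots\partial x_d^{\nu_d}$, $|\nu|=\sum\nu_i$, $x^\nu=\prod x_i^{\nu_i}$; order $+\infty$ means $C^\infty$ and all $\nu$. *)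

From HB Require Import structures.
From mathcomp Require Import all_boot all_order all_algebra.
From mathcomp Require Import all_classical all_reals all_analysis.
Set Implicit Arguments. Unset Strict Implicit. Unset Printing Implicit Defensive.
Import Order.TTheory GRing.Theory Num.Theory.
Import numFieldNormedType.Exports.
Local Open Scope ring_scope.
Local Open Scope classical_set_scope.

(* Points of R^d are row vectors 'rV[R]_d; coordinate i of x is x ord0 i. *)

Definition ebasis (R : realType) (d : nat) (i : 'I_d) : 'rV[R]_d :=
  delta_mx ord0 i.

(* partial derivative in coordinate i (total operator; meaningful where it exists) *)
Definition pderiv (R : realType) (d : nat) (i : 'I_d)
  (g : 'rV[R]_d -> R) : 'rV[R]_d -> R :=
  fun x => 'D_(ebasis R i) g x.

(* iterated partial derivative along a list of coordinates; the LAST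
   element of the list is differentiated first *)
Definition iter_pderiv (R : realType) (d : nat) (s : seq 'I_d)
  (g : 'rV[R]_d -> R) : 'rV[R]_d -> R :=
  foldr (@pderiv R d) g s.

Definition mi_abs (d : nat) (nu : 'I_d -> nat) : nat := (\sum_(i < d) nu i)%N.

Definition mderiv (R : realType) (d : nat) (nu : 'I_d -> nat)
  (g : 'rV[R]_d -> R) : 'rV[R]_d -> R :=
  iter_pderiv (flatten [seq nseq (nu i) i | i <- enum 'I_d]) g.

Definition mpow (R : realType) (d : nat) (x : 'rV[R]_d) (nu : 'I_d -> nat) : R :=
  \prod_(i < d) (x ord0 i) ^+ (nu i).

(* orders: Some n = finite order n, None = +infinity *)
Definition le_ord (k : nat) (r : option nat) : bool :=
  if r is Some n then (k <= n)%N else true.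
Definition lt_ord (k : nat) (r : option nat) : bool :=
  if r is Some n then (k < n)%N else true.

Definition isCr (R : realType) (d : nat) (U : set 'rV[R]_d) (r : option nat)
  (g : 'rV[R]_d -> R) : Prop :=
  (forall s : seq 'I_d, lt_ord (size s) r ->
     forall (i : 'I_d) x, U x -> derivable (iter_pderiv s g) x (ebasis R i)) /\
  (forall s : seq 'I_d, le_ord (size s) r ->
     forall x, U x -> {for x, continuous (iter_pderiv s g)}).

Definition mild (R : realType) (d : nat) (U : set 'rV[R]_d) (A B C : R)
  (r : option nat) (g : 'rV[R]_d -> R) : Prop :=
  isCr U r g /\
  forall (nu : 'I_d -> nat) x, le_ord (mi_abs nu) r -> U x ->
    `|mderiv nu g x| <= B `^ (C + 1) * A ^+ (mi_abs nu)
                        * ((mi_abs nu)`!%:R) `^ (C + 1).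

Definition weakly_mild (R : realType) (d : nat) (U : set 'rV[R]_d) (A B C : R)
  (r : option nat) (g : 'rV[R]_d -> R) : Prop :=
  isCr U r g /\
  forall (nu : 'I_d -> nat) x, le_ord (mi_abs nu) r -> U x ->
    `|mderiv nu g x| <= B `^ (C + 1) * A ^+ (mi_abs nu)
                        * ((mi_abs nu)`!%:R) `^ (C + 1) / mpow x nu.

Definition unit_cube (R : realType) (d : nat) : set 'rV[R]_d :=
  [set x | forall i : 'I_d, 0 < x ord0 i < 1].

(* Along any sequence s of coordinate directions, the Leibniz rule writes the
   iterated partial derivative of f1 f2 as the sum, over the 2^|s| ways of
   splitting s into two complementary subsequences s1, s2, of the products
   (d_s1 f1) (d_s2 f2).  If |d_sk fk| <= Kk ak^|sk| |sk|!^(C+1) / w^sk, then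
   |s1|! |s2|! <= |s|! and the binomial identity
   sum a1^|s1| a2^|s2| = (a1 + a2)^|s| give the bound
   K1 K2 (a1 + a2)^|s| |s|!^(C+1) / w^s for f1 f2.  The weight w^s is the
   product of the w_i over the entries of s: it is 1 for mild functions and
   x^nu for weakly mild ones, and in both cases it is multiplicative along
   splittings.  Induction on the number of factors gives the constants
   (B^(C+1))^l = (B^l)^(C+1) and l A. *)

From HB Require Import structures.
From mathcomp Require Import all_boot all_order all_algebra.
From mathcomp Require Import all_classical all_reals all_analysis.
From mathcomp Require Import ring.
Import Order.TTheory GRing.Theory Num.Theory.
Import numFieldNormedType.Exports.
Local Open Scope ring_scope.
Local Open Scope classical_set_scope.
Set Implicit Arguments. Unset Strict Implicit.

Section MultiIndexSeq.
Variable d : nat.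
Implicit Types (nu : 'I_d -> nat) (s : seq 'I_d).

Definition mi_seq nu : seq 'I_d := flatten [seq nseq (nu i) i | i <- enum 'I_d].

Lemma mderivE (R : realType) nu (g : 'rV[R]_d -> R) :
  mderiv nu g = iter_pderiv (mi_seq nu) g.
Proof. by []. Qed.

Lemma sorted_flatten_nseq disp (T : porderType disp) (t : seq T) (n : T -> nat) :
  sorted <=%O t -> sorted <=%O (flatten [seq nseq (n i) i | i <- t]).
Proof.
rewrite !(sorted_pairwise le_trans); elim: t => //= a t IHt /andP[a_le /IHt].
rewrite pairwise_cat => -> /[!andbT]; apply/andP; split.
  apply/allrelP => _ _ /nseqP[-> _] /flattenP[_ /mapP[b bt ->] /nseqP[-> _]].
  exact: (allP a_le).
by elim: (n a) => //= k ->; rewrite all_nseq lexx orbT.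
Qed.

Lemma sorted_mi_seq nu : sorted <=%O (mi_seq nu).
Proof.
apply: sorted_flatten_nseq.
by have := iota_sorted 0 d; rewrite -val_enum_ord sorted_map.
Qed.

Lemma count_mi_seq nu i : count_mem i (mi_seq nu) = nu i.
Proof.
rewrite count_flatten -map_comp sumnE big_map big_enum /=.
rewrite (bigD1 i) //= count_nseq /= eqxx mul1n big1 ?addn0 // => j /negbTE ji.
by rewrite count_nseq /= ji.
Qed.

Lemma size_mi_seq nu : size (mi_seq nu) = mi_abs nu.
Proof.
rewrite size_flatten /shape -map_comp sumnE big_map big_enum /=.
by apply: eq_bigr => i _; rewrite /= size_nseq.
Qed.

Lemma sorted_mi_seqE s : sorted <=%O s -> s = mi_seq (fun i => count_mem i s).
Proof.
move=> s_sorted; apply: (sorted_eq le_trans le_anti s_sorted (sorted_mi_seq _)).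
by apply/allP => i _ /=; rewrite count_mi_seq.
Qed.

Lemma prod_mi_seq (R : comPzSemiRingType) nu (F : 'I_d -> R) :
  \prod_(i <- mi_seq nu) F i = \prod_(i < d) F i ^+ nu i.
Proof.
rewrite big_flatten big_map big_enum /=.
by apply: eq_bigr => i _; rewrite big_nseq iter_mulr_1.
Qed.

End MultiIndexSeq.

Section Splits.
Variable T : eqType.
Implicit Types (s : seq T) (p : seq T * seq T).

Fixpoint splits s : seq (seq T * seq T) :=
  if s is i :: s' then
    [seq (i :: p.1, p.2) | p <- splits s'] ++ [seq (p.1, i :: p.2) | p <- splits s']
  else [:: ([::], [::])].

Lemma mem_splits s p : p \in splits s ->
  [/\ subseq p.1 s, subseq p.2 s & perm_eq (p.1 ++ p.2) s].
Proof.
elim: s p => [|i s IHs] p /=; first by rewrite inE => /eqP ->.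
rewrite mem_cat => /orP[] /mapP[q /IHs[sub1 sub2 perm12] ->] /=.
  rewrite eqxx sub1 perm_cons perm12; split => //.
  exact: subseq_trans sub2 (subseq_cons s i).
rewrite eqxx sub2 -cat1s perm_catCA /= perm_cons perm12; split => //.
exact: subseq_trans sub1 (subseq_cons s i).
Qed.

Lemma size_splits s p : p \in splits s -> (size p.1 + size p.2)%N = size s.
Proof. by case/mem_splits => _ _ /perm_size; rewrite size_cat. Qed.

Lemma sum_splits_exp (R : comPzSemiRingType) s (a b : R) :
  \sum_(p <- splits s) a ^+ size p.1 * b ^+ size p.2 = (a + b) ^+ size s.
Proof.
elim: s => [|i s IHs] /=; first by rewrite big_seq1 mulr1.
rewrite big_cat !big_map /= exprS mulrDl -IHs !mulr_sumr.
by congr (_ + _); apply: eq_bigr => p _; rewrite exprS; ring.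
Qed.

End Splits.

Lemma lt_ordE k r : lt_ord k r = le_ord k.+1 r.
Proof. by case: r. Qed.

Lemma le_ord_leq k m r : (k <= m)%N -> le_ord m r -> le_ord k r.
Proof. by case: r => //= n /leq_trans; apply. Qed.

Lemma lt_ordW k r : lt_ord k r -> le_ord k r.
Proof. by rewrite lt_ordE; apply: le_ord_leq. Qed.

Section SeqSums.
Variables (R : numFieldType) (V W : normedModType R) (I : eqType).
Implicit Types (t : seq I) (h : I -> V -> W).

Lemma is_derive_sum_seq t h (dh : I -> W) x v :
  (forall p, p \in t -> is_derive x v (h p) (dh p)) ->
  is_derive x v (\sum_(p <- t) h p) (\sum_(p <- t) dh p).
Proof.
move=> hdh; rewrite !big_seq; elim/big_ind2: _ => //.
- exact: is_derive_cst.
- by move=> *; exact: is_deriveD.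
Qed.

Lemma continuous_sum_seq t h x :
  (forall p, p \in t -> {for x, continuous (h p)}) ->
  {for x, continuous (\sum_(p <- t) h p)}.
Proof.
move=> hc; rewrite big_seq; elim/big_ind: _ => //.
- exact: cst_continuous.
- by move=> *; exact: continuousD.
Qed.

End SeqSums.

Section Leibniz.
Variables (R : realType) (d : nat) (U : set 'rV[R]_d) (r : option nat).
Implicit Types (f g : 'rV[R]_d -> R) (s : seq 'I_d).

Definition derivable_upto g := forall s, lt_ord (size s) r ->
  forall i x, U x -> derivable (iter_pderiv s g) x (ebasis R i).

Definition leibniz_sum f g s : 'rV[R]_d -> R :=
  \sum_(p <- splits s) iter_pderiv p.1 f * iter_pderiv p.2 g.

Lemma derivable_upto_le g s i x : derivable_upto g -> lt_ord (size s) r -> U x ->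
  forall s', (size s' <= size s)%N -> derivable (iter_pderiv s' g) x (ebasis R i).
Proof.
move=> dg hs Ux s' le_s's; apply: dg Ux.
by rewrite lt_ordE in hs *; exact: le_ord_leq hs.
Qed.

Lemma is_derive_leibniz_sum f g s i x :
  (forall s', (size s' <= size s)%N -> derivable (iter_pderiv s' f) x (ebasis R i)) ->
  (forall s', (size s' <= size s)%N -> derivable (iter_pderiv s' g) x (ebasis R i)) ->
  is_derive x (ebasis R i) (leibniz_sum f g s) (leibniz_sum f g (i :: s) x).
Proof.
move=> df dg; have -> : leibniz_sum f g (i :: s) x = \sum_(p <- splits s)
    (iter_pderiv p.1 f x * iter_pderiv (i :: p.2) g x +
     iter_pderiv p.2 g x * iter_pderiv (i :: p.1) f x).
  rewrite /leibniz_sum fct_sumE /= big_cat !big_map /= addrC -big_split.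
  by apply: eq_bigr => p _; congr (_ + _); exact: mulrC.
apply: is_derive_sum_seq => p /size_splits size12.
rewrite -size12 in df dg.
exact: is_deriveM (derivableP (df _ (leq_addr _ _))) (derivableP (dg _ (leq_addl _ _))).
Qed.

Lemma iter_pderivM f g : open U -> derivable_upto f -> derivable_upto g ->
  forall s x, le_ord (size s) r -> U x ->
  iter_pderiv s (f * g) x = leibniz_sum f g s x.
Proof.
move=> U_open df dg; elim=> [|i s IHs] x hs Ux; first by rewrite /leibniz_sum big_seq1.
have hs1 : lt_ord (size s) r by rewrite lt_ordE.
rewrite /= /pderiv (near_eq_derive (g := leibniz_sum f g s)).
  apply: derive_val; apply: is_derive_leibniz_sum.
  - exact: derivable_upto_le df hs1 Ux.
  - exact: derivable_upto_le dg hs1 Ux.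
apply: filterS (U_open _ Ux) => y Uy.
exact: IHs (lt_ordW hs1) Uy.
Qed.

Lemma isCr_mul f g : open U -> isCr U r f -> isCr U r g -> isCr U r (f * g).
Proof.
move=> U_open [df cf] [dg cg].
have leibniz_near s x : le_ord (size s) r -> U x ->
    {near x, leibniz_sum f g s =1 iter_pderiv s (f * g)}.
  move=> hs Ux; apply: filterS (U_open _ Ux) => y Uy.
  by rewrite (iter_pderivM U_open df dg hs Uy).
split=> [s hs i x Ux | s hs x Ux].
  apply: near_eq_derivable (leibniz_near _ _ (lt_ordW hs) Ux) _.
  apply: ex_derive; apply: is_derive_leibniz_sum.
  - exact: derivable_upto_le df hs Ux.
  - exact: derivable_upto_le dg hs Ux.
rewrite /prop_for /continuous_at (iter_pderivM U_open df dg hs Ux).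
apply: cvg_trans (near_eq_cvg (leibniz_near _ _ hs Ux)) _.
apply: continuous_sum_seq => p /size_splits size12.
rewrite -size12 in hs; apply: continuousM.
  by apply: cf => //; apply: le_ord_leq hs; exact: leq_addr.
by apply: cg => //; apply: le_ord_leq hs; exact: leq_addl.
Qed.

Lemma iter_pderiv_cst s (c : R) :
  iter_pderiv s (cst c) = cst (if s is [::] then c else 0).
Proof.
elim: s => //= i s ->; apply: funext => x.
by rewrite /pderiv derive_cst.
Qed.

Lemma isCr_cst (c : R) : isCr U r (cst c).
Proof.
split=> [s _ i x _ | s _ x _]; rewrite iter_pderiv_cst.
  exact: derivable_cst.
exact: cst_continuous.
Qed.

End Leibniz.

Lemma leq_fact_mul k1 k2 : (k1`! * k2`! <= (k1 + k2)`!)%N.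
Proof.
have := bin_fact (leq_addr k2 k1); rewrite addKn => <-.
by rewrite leq_pmull // bin_gt0 leq_addr.
Qed.

Lemma fact_mul_powR (R : realType) (e : R) k1 k2 : 0 <= e ->
  k1`!%:R `^ e * k2`!%:R `^ e <= (k1 + k2)`!%:R `^ e.
Proof.
move=> e_ge0; rewrite -powRM // -natrM.
by apply: ge0_ler_powR; rewrite ?nnegrE ?ler0n // ler_nat leq_fact_mul.
Qed.

Section DerivBound.
Variables (R : realType) (d : nat) (U : set 'rV[R]_d) (r : option nat).
Variables (C : R) (w : 'rV[R]_d -> 'I_d -> R).
Implicit Types (f g : 'rV[R]_d -> R) (s : seq 'I_d) (K a : R).

(* Sorted sequences of directions are exactly the mi_seq nu, and both parts of
   a split of a sorted sequence are sorted: bounding derivatives along sorted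
   sequences avoids any appeal to the symmetry of mixed partial derivatives. *)
Definition deriv_bound K a g := forall s x, sorted <=%O s -> le_ord (size s) r ->
  U x -> `|iter_pderiv s g x| <= K * a ^+ size s * (size s)`!%:R `^ (C + 1)
                                 / \prod_(i <- s) w x i.

Lemma deriv_bound_cst1 : deriv_bound 1 0 (cst 1).
Proof.
case=> [|i s] x _ _ _; rewrite iter_pderiv_cst /=.
  by rewrite normr1 big_nil fact0 powR1 !mulr1 divr1.
by rewrite expr0n /= mulr0 !mul0r normr_le0.
Qed.

Hypotheses (U_open : open U) (w_ge0 : forall x i, U x -> 0 <= w x i).
Hypothesis C_ge0 : 0 <= C.

Lemma deriv_bound_mul f g K1 K2 a1 a2 :
  derivable_upto U r f -> derivable_upto U r g ->
  0 <= K1 -> 0 <= K2 -> 0 <= a1 -> 0 <= a2 ->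
  deriv_bound K1 a1 f -> deriv_bound K2 a2 g ->
  deriv_bound (K1 * K2) (a1 + a2) (f * g).
Proof.
move=> df dg K1_ge0 K2_ge0 a1_ge0 a2_ge0 bf bg s x s_sorted hs Ux.
rewrite (iter_pderivM U_open df dg hs Ux) /leibniz_sum fct_sumE.
rewrite -sum_splits_exp mulr_sumr !mulr_suml.
apply: le_trans (ler_norm_sum _ _ _) _.
rewrite big_seq [leRHS]big_seq; apply: ler_sum => p ps.
have [sub1 sub2 perm12] := mem_splits ps.
have size12 := size_splits ps; rewrite -size12 in hs.
have bf1 := bf _ _ (subseq_sorted le_trans sub1 s_sorted)
  (le_ord_leq (leq_addr _ _) hs) Ux.
have bg2 := bg _ _ (subseq_sorted le_trans sub2 s_sorted)
  (le_ord_leq (leq_addl _ _) hs) Ux.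
rewrite normrM; apply: le_trans (ler_pM (normr_ge0 _) (normr_ge0 _) bf1 bg2) _.
rewrite -(perm_big _ perm12) big_cat /= -size12.
set W1 := \prod_(i <- p.1) w x i; set W2 := \prod_(i <- p.2) w x i.
set F1 := _ `^ (C + 1); set F2 := _ `^ (C + 1).
have -> : K1 * a1 ^+ size p.1 * F1 / W1 * (K2 * a2 ^+ size p.2 * F2 / W2) =
    K1 * K2 * (a1 ^+ size p.1 * a2 ^+ size p.2) * (F1 * F2) / (W1 * W2).
  by rewrite invfM; ring.
have W_ge0 t : 0 <= \prod_(i <- t) w x i by apply: prodr_ge0 => i _; exact: w_ge0.
apply: ler_wpM2r; first by rewrite invr_ge0; apply: mulr_ge0; apply: W_ge0.
apply: ler_wpM2l; first by rewrite !mulr_ge0 ?exprn_ge0.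
by apply: fact_mul_powR; rewrite addr_ge0.
Qed.

Lemma isCr_deriv_bound_prod (I : Type) (t : seq I) (f : I -> 'rV[R]_d -> R)
    (K a : I -> R) :
  (forall j, 0 <= K j) -> (forall j, 0 <= a j) ->
  (forall j, isCr U r (f j) /\ deriv_bound (K j) (a j) (f j)) ->
  isCr U r (\prod_(j <- t) f j) /\
  deriv_bound (\prod_(j <- t) K j) (\sum_(j <- t) a j) (\prod_(j <- t) f j).
Proof.
move=> K_ge0 a_ge0 hf; elim: t => [|j t [IHcr IHb]].
  by rewrite !big_nil; split; [exact: isCr_cst | exact: deriv_bound_cst1].
rewrite !big_cons; have [fCr fb] := hf j; split; first exact: isCr_mul.
apply: deriv_bound_mul fb IHb => //; first exact: fCr.1.
- exact: IHcr.1.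
- exact: prodr_ge0.
- exact: sumr_ge0.
Qed.

End DerivBound.

Section MildE.
Variables (R : realType) (d : nat) (U : set 'rV[R]_d) (r : option nat).
Variables (A B C : R).
Implicit Type g : 'rV[R]_d -> R.

Lemma deriv_boundE (w : 'rV[R]_d -> 'I_d -> R) K a g :
  deriv_bound U r C w K a g <->
  forall nu x, le_ord (mi_abs nu) r -> U x ->
    `|mderiv nu g x| <= K * a ^+ mi_abs nu * (mi_abs nu)`!%:R `^ (C + 1)
                        / \prod_(i < d) w x i ^+ nu i.
Proof.
split=> [bg nu x | bg s x s_sorted].
  rewrite mderivE -size_mi_seq -prod_mi_seq; apply: bg; exact: sorted_mi_seq.
by rewrite (sorted_mi_seqE s_sorted) size_mi_seq prod_mi_seq; apply: bg.
Qed.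

Lemma mildE g : mild U A B C r g <->
  isCr U r g /\ deriv_bound U r C (fun _ _ => 1) (B `^ (C + 1)) A g.
Proof.
have weight1 nu : \prod_(i < d) (1 : R) ^+ nu i = 1.
  by rewrite big1 // => i _; exact: expr1n.
rewrite /mild; split=> -[gCr gb]; split=> //.
  by apply/deriv_boundE => nu x hnu Ux; rewrite weight1 divr1; exact: gb.
move/deriv_boundE: gb => gb nu x hnu Ux.
by have := gb nu x hnu Ux; rewrite weight1 divr1.
Qed.

Lemma weakly_mildE g : weakly_mild U A B C r g <->
  isCr U r g /\ deriv_bound U r C (fun x i => x ord0 i) (B `^ (C + 1)) A g.
Proof. by split=> -[gCr gb]; split=> //; apply/deriv_boundE. Qed.

End MildE.

Lemma powR_exprn (R : realType) (B e : R) l : 0 <= B ->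
  (B ^+ l) `^ e = (B `^ e) ^+ l.
Proof.
move=> B_ge0; rewrite -powR_mulrn // -powRrM mulrC powRrM powR_mulrn //.
exact: powR_ge0.
Qed.

Theorem mainTheorem7 (R : realType) (d : nat) (U : set 'rV[R]_d)
  (A B C : R) (r : option nat) (l : nat) (f : 'I_l -> 'rV[R]_d -> R) :
  open U -> U `<=` @unit_cube R d ->
  0 < A -> 0 < B -> 0 <= C ->
  (if r is Some n then (0 < n)%N else true) ->
  (1 <= l)%N ->
  ((forall j, mild U A B C r (f j)) ->
     mild U (l%:R * A) (B ^+ l) C r (fun x => \prod_(j < l) f j x)) /\
  ((forall j, weakly_mild U A B C r (f j)) ->
     weakly_mild U (l%:R * A) (B ^+ l) C r (fun x => \prod_(j < l) f j x)).
Proof.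
move=> U_open U_cube A_gt0 B_gt0 C_ge0 _ _.
have sumA : \sum_(j < l) A = l%:R * A by rewrite sumr_const card_ord mulr_natl.
have prodB : \prod_(j < l) B `^ (C + 1) = (B ^+ l) `^ (C + 1).
  by rewrite prodr_const card_ord powR_exprn // ltW.
have coord_ge0 x i : U x -> 0 <= x ord0 i.
  by move=> /U_cube /(_ i) /andP[/ltW].
rewrite -fct_prodE; split=> fj.
  apply/mildE; rewrite -sumA -prodB.
  apply: isCr_deriv_bound_prod => // [j | j | j]; last exact/mildE.
  - exact: powR_ge0.
  - exact: ltW.
apply/weakly_mildE; rewrite -sumA -prodB.
apply: isCr_deriv_bound_prod => // [j | j | j]; last exact/weakly_mildE.
- exact: powR_ge0.
- exact: ltW.
Qed.
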